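(* Let $V=\{0,1\}^n$ with uniform measure $\mu$. For any partition $(A,B,W)$ of $V$ there is another partition $(A',B',W')$ of $V$ such that: (1) $\mu(A')=\mu(A)$, $\mu(B')=\mu(B)$, $\mu(W')=\mu(W)$; (2) $A'$ is increasing and $B'$ is decreasing; (3) $|\nabla_i(A,B)|\ge|\nabla_i(A',B')|$ for all $i\in[n]$.
   Context: $V$ carries the coordinatewise product order. $A\subseteq V$ is increasing if $x\in A$ and $y\ge x$ imply $y\in A$; decreasing is defined analogously with $y\le x$. For $x\in V$, $x^i$ is $x$ with coordinate $i$ flipped, and $\nabla_i(A,B)=\{(x,x^i): x\in A,\ x^i\in B\}$. *)

From HB Require Import structures.
From mathcomp Require Import all_boot all_order all_algebra.
Set Implicit Arguments. Unset Strict Implicit. Unset Printing Implicit Defensive.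
Import GRing.Theory Num.Theory.

(* The discrete cube V = {0,1}^n, points are finite functions 'I_n -> bool
   (false = 0, true = 1). *)
Definition cube (n : nat) := {ffun 'I_n -> bool}.

Definition cube_le n (x y : cube n) : bool := [forall i, x i ==> y i].

Definition increasing n (A : {set cube n}) : Prop :=
  forall x y : cube n, x \in A -> cube_le x y -> y \in A.

Definition decreasing n (A : {set cube n}) : Prop :=
  forall x y : cube n, x \in A -> cube_le y x -> y \in A.

Definition flip n (x : cube n) (i : 'I_n) : cube n :=
  [ffun j => if j == i then ~~ x j else x j].

Definition nabla n (i : 'I_n) (A B : {set cube n}) : {set cube n * cube n} :=
  [set p | [&& p.1 \in A, p.2 == flip p.1 i & p.2 \in B]].

Definition mu n (A : {set cube n}) : rat := (#|A|%:R / #|{: cube n}|%:R)%R.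

(* (A,B,W) is a partition of V: pairwise disjoint and covering V
   (parts may be empty) *)
Definition is_partition3 n (A B W : {set cube n}) : Prop :=
  [/\ [disjoint A & B], [disjoint A & W], [disjoint B & W]
    & A :|: B :|: W = [set: cube n]].

From HB Require Import structures.
From mathcomp Require Import all_boot all_order all_algebra.
From mathcomp Require Import zify.
Set Implicit Arguments. Unset Strict Implicit. Unset Printing Implicit Defensive.

(* Encode the partition by f = 2 on A, 0 on B and 1 on W.  Compressing f in
   direction j sorts the two values on every j-edge, putting the larger one
   at the endpoint with coordinate j equal to 1.  This preserves every level
   set size, and it does not increase the number of i-edges from
   {s <= f} to {f <= t}: for i = j the values on each i-edge are only swapped,
   and for i <> j this is a check on the four values of a square.  Each
   compression that changes f strictly increases sum_x f x * |x|, which is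
   bounded, so iterating ends at an f that is monotone along every edge and
   hence for the product order; its levels are the required partition. *)

Lemma addn_map_min_max (h : nat -> nat) (a b : nat) :
  h (minn a b) + h (maxn a b) = h a + h b.
Proof. by case: (leqP a b) => _; rewrite // addnC. Qed.

Lemma addn_min_max_sym (h : nat -> nat -> nat) (a b : nat) :
  h (minn a b) (maxn a b) + h (maxn a b) (minn a b) = h a b + h b a.
Proof. by case: (leqP a b) => _; rewrite // addnC. Qed.

Lemma square_cut (a b c d s t : nat) :
  ((s <= minn a b) && (minn c d <= t)) + ((s <= maxn a b) && (maxn c d <= t))
  <= ((s <= a) && (c <= t)) + ((s <= b) && (d <= t)).
Proof.
rewrite leq_min geq_min leq_max geq_max.
by case: (s <= a); case: (s <= b); case: (c <= t); case: (d <= t).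
Qed.

Lemma leq_rearrange (a b u v : nat) :
  u <= v -> a * u + b * v <= minn a b * u + maxn a b * v.
Proof. by case: (leqP a b) => ? ?; nia. Qed.

Lemma ltn_rearrange (a b u v : nat) :
  u < v -> b < a -> a * u + b * v < minn a b * u + maxn a b * v.
Proof. by case: (leqP a b) => ? ? ?; nia. Qed.

Lemma card_set_sum (T : finType) (P : pred T) :
  #|[set x | P x]| = \sum_x (P x : nat).
Proof.
rewrite -sum1_card big_mkcond /=; apply: eq_bigr => x _.
by rewrite inE; case: (P x).
Qed.

Section Compression.

Variable n : nat.
Implicit Types (f g : cube n -> nat) (x y : cube n) (i j : 'I_n).

Lemma flipK j : involutive (fun x => flip x j).
Proof. by move=> x; apply/ffunP => k; rewrite !ffunE; case: eqP; rewrite ?negbK. Qed.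

Lemma flip_self x j : flip x j j = ~~ x j.
Proof. by rewrite ffunE eqxx. Qed.

Lemma flip_other x i j : j != i -> flip x i j = x j.
Proof. by rewrite ffunE => /negbTE ->. Qed.

Lemma flipC x i j : flip (flip x j) i = flip (flip x i) j.
Proof. by apply/ffunP => k; rewrite !ffunE; case: (k == i); case: (k == j). Qed.

Lemma sum_cube_flip_pairs j (h : cube n -> nat) :
  \sum_x h x = \sum_(x : cube n | ~~ x j) (h x + h (flip x j)).
Proof.
rewrite big_split (bigID (fun x : cube n => ~~ x j)) /=; congr (_ + _).
rewrite (reindex_inj (inv_inj (@flipK j))) /=.
by apply: eq_bigl => x; rewrite flip_self negbK.
Qed.

Lemma card_nabla i (A B : {set cube n}) :
  #|nabla i A B| = #|[set x in A | flip x i \in B]|.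
Proof.
have -> : nabla i A B = (fun x => (x, flip x i)) @: [set x in A | flip x i \in B].
  apply/setP => -[x y]; rewrite inE /=; apply/and3P/imsetP.
    by move=> [xA /eqP -> yB]; exists x; rewrite // inE xA yB.
  by move=> [z]; rewrite inE => /andP[zA zB] [-> ->].
by apply: card_imset => x y [].
Qed.

Definition weight x : nat := #|[set k | x k]|.

Lemma weight_flip_lt x j : ~~ x j -> weight x < weight (flip x j).
Proof.
move=> xj; apply: proper_card; apply/properP; split.
  by apply/subsetP => k; rewrite !inE ffunE; case: eqP => // ->; rewrite (negbTE xj).
by exists j; rewrite inE ?flip_self.
Qed.

Definition compress j f x : nat :=
  if x j then maxn (f x) (f (flip x j)) else minn (f x) (f (flip x j)).

Lemma compress_low j f x : ~~ x j -> compress j f x = minn (f x) (f (flip x j)).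
Proof. by rewrite /compress => /negbTE ->. Qed.

Lemma compress_high j f x :
  ~~ x j -> compress j f (flip x j) = maxn (f x) (f (flip x j)).
Proof. by move=> xj; rewrite /compress flip_self xj flipK maxnC. Qed.

Lemma levels_compress j f (p : pred nat) :
  #|[set x | p (compress j f x)]| = #|[set x | p (f x)]|.
Proof.
rewrite !card_set_sum !(sum_cube_flip_pairs j); apply: eq_bigr => x xj.
rewrite (compress_low _ xj) (compress_high _ xj).
exact: (addn_map_min_max (fun v => nat_of_bool (p v))).
Qed.

Definition level_nabla i (s t : nat) f := nabla i [set x | s <= f x] [set x | f x <= t].

Lemma card_level_nabla i s t f :
  #|level_nabla i s t f| = \sum_x ((s <= f x) && (f (flip x i) <= t)).
Proof. by rewrite card_nabla card_set_sum; apply: eq_bigr => x _; rewrite !inE. Qed.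

Lemma level_nabla_compress i j s t f :
  #|level_nabla i s t (compress j f)| <= #|level_nabla i s t f|.
Proof.
rewrite !card_level_nabla !(sum_cube_flip_pairs j); apply: leq_sum => x xj.
have [->|ij] := eqVneq i j.
  rewrite flipK (compress_low _ xj) (compress_high _ xj); apply/eq_leq.
  exact: (addn_min_max_sym (fun u v => (s <= u) && (v <= t))).
have xij : ~~ flip x i j by rewrite flip_other 1?eq_sym.
rewrite flipC (compress_low _ xj) (compress_high _ xj).
by rewrite (compress_low _ xij) (compress_high _ xij) square_cut.
Qed.

Definition improves f g : Prop :=
  (forall p : pred nat, #|[set x | p (g x)]| = #|[set x | p (f x)]|) /\
  (forall i s t, #|level_nabla i s t g| <= #|level_nabla i s t f|).

Lemma improves_refl f : improves f f.
Proof. by []. Qed.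

Lemma improves_trans f g h : improves f g -> improves g h -> improves f h.
Proof.
move=> [fg1 fg2] [gh1 gh2]; split=> [p|i s t]; first by rewrite gh1.
exact: leq_trans (gh2 i s t) (fg2 i s t).
Qed.

Lemma improves_compress j f : improves f (compress j f).
Proof. by split=> [p|i s t]; [apply: levels_compress | apply: level_nabla_compress]. Qed.

Lemma improves_bound f g (M : nat) :
  improves f g -> (forall x, f x <= M) -> forall x, g x <= M.
Proof.
move=> [levels _] fM x; rewrite leqNgt; apply/negP => Mg.
have : #|[set y | M < g y]| == 0.
  by rewrite levels cards_eq0; apply/eqP/setP => y; rewrite !inE ltnNge fM.
by rewrite cards_eq0 => /eqP/setP/(_ x); rewrite !inE Mg.
Qed.

Definition potential f := \sum_x f x * weight x.

Lemma potential_bound f (M : nat) :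
  (forall x, f x <= M) -> potential f <= M * \sum_x weight x.
Proof. by move=> fM; rewrite big_distrr; apply: leq_sum => x _; rewrite leq_mul2r fM orbT. Qed.

Lemma potential_compress_lt j f x :
  ~~ x j -> f (flip x j) < f x -> potential f < potential (compress j f).
Proof.
move=> xj lt; rewrite /potential !(sum_cube_flip_pairs j).
rewrite (bigD1 x) // [X in _ < X](bigD1 x) //= -addSn.
apply: leq_add.
  by rewrite (compress_low _ xj) (compress_high _ xj) ltn_rearrange ?weight_flip_lt.
apply: leq_sum => y /andP[yj _].
by rewrite (compress_low _ yj) (compress_high _ yj) leq_rearrange // ltnW ?weight_flip_lt.
Qed.

Definition flip_monotone f := forall x j, ~~ x j -> f x <= f (flip x j).

Lemma flip_monotone_homo f :
  flip_monotone f -> {homo f : x y / cube_le x y >-> x <= y}.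
Proof.
move=> mono x y; have [k] := ubnP (weight y); elim: k y => // k IH y.
rewrite ltnS => wy xy; have [->//|neq] := eqVneq x y.
have [i /andP[xi yi]] : exists i, ~~ x i && y i.
  apply/existsP; apply: contraNT neq => /existsPn h.
  apply/eqP/ffunP => i; have := h i; have := forallP xy i.
  by case: (x i); case: (y i).
have yi' : ~~ flip y i i by rewrite flip_self yi.
apply: leq_trans (IH (flip y i) _ _) _.
- by apply: leq_trans wy; rewrite -{2}(flipK i y) weight_flip_lt.
- apply/forallP => l; rewrite ffunE; case: eqP => [->|_]; first by rewrite (negbTE xi).
  exact: (forallP xy l).
- by rewrite -{2}(flipK i y) mono.
Qed.

Lemma exists_monotone_improvement f : exists2 g, improves f g & flip_monotone g.
Proof.
pose M := \max_x f x.
have gM g : improves f g -> forall x, g x <= M.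
  by move=> fg; apply: improves_bound fg _ => x; apply: leq_bigmax.
suff: forall g, improves f g -> exists2 h, improves f h & flip_monotone h.
  by apply; apply: improves_refl.
move=> g; have [k] := ubnP (M * \sum_x weight x - potential g).
elim: k g => // k IH g; rewrite ltnS => lt_k fg.
have [/existsP[x /existsP[j /andP[xj lt]]] | /existsPn mono] :=
  boolP [exists x : cube n, exists j, ~~ x j && (g (flip x j) < g x)].
  have fcg := improves_trans fg (improves_compress j g).
  apply: (IH _ _ fcg); apply: leq_trans lt_k.
  have := potential_compress_lt xj lt; have := potential_bound (gM _ fcg); lia.
exists g => // x j xj.
by have /existsPn/(_ j) := mono x; rewrite xj -leqNgt.
Qed.

Lemma levels_partition g :
  is_partition3 [set x | 2 <= g x] [set x | g x <= 0] [set x | g x == 1].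
Proof.
split; try by rewrite disjoints_subset; apply/subsetP => x; rewrite !inE; lia.
by apply/setP => x; rewrite !inE; case: (g x) => [|[|]].
Qed.

Lemma partition_as_levels (A B W : {set cube n}) : is_partition3 A B W ->
  exists f, [/\ A = [set x | 2 <= f x], B = [set x | f x <= 0] & W = [set x | f x == 1]].
Proof.
move=> [dAB dAW dBW cover].
exists (fun x => if x \in A then 2 else if x \in B then 0 else 1).
split; apply/setP => x; rewrite inE.
- by case: ifP => // _; case: ifP.
- by case: ifPn => [xA|_]; [rewrite (disjointFr dAB xA) | case: ifP].
- have /setP/(_ x) := cover; rewrite !inE.
  case: ifPn => [xA|_]; first by rewrite (disjointFr dAW xA).
  by case: ifPn => [xB|_ /= ->]; first by rewrite (disjointFr dBW xB).
Qed.

End Compression.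

Theorem proposition3p4 (n : nat) (A B W : {set cube n}) :
  is_partition3 A B W ->
  exists A' B' W' : {set cube n},
    [/\ is_partition3 A' B' W',
        [/\ mu A' = mu A, mu B' = mu B & mu W' = mu W],
        increasing A' /\ decreasing B'
      & forall i : 'I_n, #|nabla i A' B'| <= #|nabla i A B|].
Proof.
move=> /partition_as_levels[f [-> -> ->]].
have [g [levels nablas] mono] := exists_monotone_improvement f.
exists [set x | 2 <= g x], [set x | g x <= 0], [set x | g x == 1]; split.
- exact: levels_partition.
- split; rewrite /mu; congr (_%:R / _)%R.
  + exact: (levels (fun v => 2 <= v)).
  + exact: (levels (fun v => v <= 0)).
  + exact: (levels (fun v => v == 1)).
- by split=> x y; rewrite !inE => gx /(flip_monotone_homo mono) gxy; lia.
- by move=> i; apply: (nablas i 2 0).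
Qed.
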